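(* Let $\kappa>0$ be a cardinal and let $T_\kappa$ be a tournament with at most $\mathsf{exp}_{10}(\kappa)$ vertices such that every $\kappa$-edge-colouring of $T_\kappa$ contains a quasi-monochromatic directed cycle of length three; put $\lambda_\kappa=|V(T_\kappa)|$. Let $T$ be a $\kappa$-edge-coloured tournament that has no king-serf duo by monochromatic paths of size at most $\lambda_\kappa$. Then $T$ has a subtournament isomorphic to $T_\kappa$ all of whose edges are forbidding edges of $T$.
   Context: A tournament is a directed graph obtained by orienting every edge of a (possibly infinite) complete undirected graph. For a cardinal $\kappa$, $\mathsf{exp}_0(\kappa)=\kappa$, $\mathsf{exp}_{k+1}(\kappa)=2^{\mathsf{exp}_k(\kappa)}$. A $\kappa$-edge-colouring of $T$ is a function $c:A(T)\to\kappa$. A monochromatic path is a directed path (no repeated vertices) whose edges all have the same colour. A directed cycle is quasi-monochromatic if all but at most one of its edges have the same colour. A king-serf duo by monochromatic paths in $T$ is a pair of disjoint sets $K,S\subseteq V(T)$ such that every vertex $v$ has a monochromatic path of length at most two from a vertex of $K$ to $v$ or from $v$ to a vertex of $S$; its size is $|K|+|S|$. An edge $uv$ of $T$ is forbidding if there is no monochromatic path of length at most two from $v$ to $u$ in $T$. *)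

(* exp_k(X): exp_0 X = X, exp_{k+1} X = power set of exp_k X  (2^{exp_k}). *)
Fixpoint expT (n : nat) (X : Type) : Type :=
  match n with
  | O => X
  | S m => expT m X -> Prop
  end.

Definition card_le (A B : Type) : Prop :=
  exists f : A -> B, forall x y, f x = f y -> x = y.

Definition tournament {V : Type} (E : V -> V -> Prop) : Prop :=
  (forall u, ~ E u u) /\
  (forall u v, u <> v -> E u v \/ E v u) /\
  (forall u v, E u v -> ~ E v u).

(* An edge colouring with colours in K; only the values on arcs are relevant. *)
Definition colouring (V K : Type) := V -> V -> K.

Definition has_qm_triangle {V K : Type} (E : V -> V -> Prop) (c : colouring V K) : Prop :=
  exists a b d : V,
    a <> b /\ b <> d /\ a <> d /\
    E a b /\ E b d /\ E d a /\
    (c a b = c b d \/ c b d = c d a \/ c a b = c d a).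

Definition mono_path_le2 {V K : Type} (E : V -> V -> Prop) (c : colouring V K) (u v : V) : Prop :=
  u = v \/ E u v \/
  (exists w, u <> w /\ w <> v /\ u <> v /\ E u w /\ E w v /\ c u w = c w v).

Definition king_serf_duo {V K : Type} (E : V -> V -> Prop) (c : colouring V K)
  (Ks Ss : V -> Prop) : Prop :=
  (forall v, ~ (Ks v /\ Ss v)) /\
  (forall v, (exists k, Ks k /\ mono_path_le2 E c k v) \/
             (exists s, Ss s /\ mono_path_le2 E c v s)).

(* Its size |Ks| + |Ss| (= |Ks ∪ Ss| as they are disjoint) is at most |W|. *)
Definition duo_size_le {V : Type} (Ks Ss : V -> Prop) (W : Type) : Prop :=
  card_le {v : V | Ks v \/ Ss v} W.

Definition forbidding {V K : Type} (E : V -> V -> Prop) (c : colouring V K) (u v : V) : Prop :=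
  E u v /\ ~ mono_path_le2 E c v u.

From mathcomp Require Import ssreflect ssrfun ssrbool.
From mathcomp Require Import boolp classical_sets.

(* By Zorn's lemma there is a maximal partial embedding of T0 into T all of
   whose arcs are forbidding.  It is total: if x is not yet embedded, take the
   images of its out-neighbours as kings and those of its in-neighbours as
   serfs.  They are disjoint and there are at most |V(T0)| of them, so they do
   not form a king-serf duo; a vertex w that they fail to absorb can serve as
   the image of x, since every arc between w and a king or serf is then
   forbidding and oriented as in T0. *)

Set Implicit Arguments.
Unset Strict Implicit.

Local Open Scope classical_set_scope.

Lemma mono_path_le2_arc (V K : Type) (E : V -> V -> Prop) (c : colouring V K) u v :
  E u v -> mono_path_le2 E c u v.
Proof. by right; left. Qed.

Lemma uncovered_vertex (V K W : Type) (E : V -> V -> Prop) (c : colouring V K)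
    (Ks Ss : set V) :
  ~ (exists Ks Ss, king_serf_duo E c Ks Ss /\ duo_size_le Ks Ss W) ->
  (forall v, ~ (Ks v /\ Ss v)) -> duo_size_le Ks Ss W ->
  exists w, (forall k, Ks k -> ~ mono_path_le2 E c k w) /\
            (forall s, Ss s -> ~ mono_path_le2 E c w s).
Proof.
move=> no_duo disj small; apply: contrapT => covered.
apply: no_duo; exists Ks, Ss; split=> //; split=> // v.
apply: contrapT => Nv; apply: covered; exists v.
by split=> [k Kk kv | s Ss_s vs]; apply: Nv; [left; exists k | right; exists s].
Qed.

Lemma card_le_functional_range (A B : Type) (G : set (A * B)) (P : set B) :
  (forall a b b', G (a, b) -> G (a, b') -> b = b') ->
  (forall b, P b -> exists a, G (a, b)) -> card_le {b | P b} A.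
Proof.
move=> Gfun Prange.
have pre (p : {b | P b}) : exists a, G (a, sval p) by exact: Prange (svalP p).
exists (fun p => sval (cid (pre p))) => p q.
case: cid => a Gap; case: cid => a' Gaq /= aa'; subst a'.
case: p q Gap Gaq => [b Pb] [b' Pb'] /= Gab Gab'.
by apply: eq_exist; exact: Gfun Gab Gab'.
Qed.

Section ForbiddingEmbedding.

Variables (V0 : Type) (E0 : V0 -> V0 -> Prop).
Variables (V K : Type) (E : V -> V -> Prop) (c : colouring V K).
Hypotheses (HT0 : tournament E0) (HT : tournament E).

Definition forbidding_pembedding (G : set (V0 * V)) : Prop :=
  forall x u y v, G (x, u) -> G (y, v) ->
    [/\ x = y <-> u = v, E0 x y <-> E u v & E0 x y -> forbidding E c u v].

Lemma forbidding_pembedding_bigcup (F : set (set (V0 * V))) :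
  F `<=` forbidding_pembedding -> total_on F subset ->
  forbidding_pembedding (\bigcup_(G in F) G).
Proof.
move=> FP Ftot x u y v [G FG Gxu] [H FH Hyv].
have [GH|HG] := Ftot _ _ FG FH.
- exact: FP H FH x u y v (GH _ Gxu) Hyv.
- exact: FP G FG x u y v Gxu (HG _ Hyv).
Qed.

Lemma new_vertex_arcs (x y : V0) (w u : V) : x <> y ->
  (E0 x y -> ~ mono_path_le2 E c u w) -> (E0 y x -> ~ mono_path_le2 E c w u) ->
  [/\ w <> u, E0 x y <-> E w u & E0 y x <-> E u w].
Proof.
case: HT0 HT => _ [tot0 _] [_ [tot _]] xy out_x in_x.
have wu : w <> u.
  move=> wu; subst u.
  by have [Exy|Eyx] := tot0 _ _ xy; [apply: out_x Exy _ | apply: in_x Eyx _]; left.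
split=> //; split=> [Exy | Ewu].
- have [//|Euw] := tot _ _ wu.
  by case: (out_x Exy); exact: mono_path_le2_arc.
- have [//|Eyx] := tot0 _ _ xy.
  by case: (in_x Eyx); exact: mono_path_le2_arc.
- have [Ewu|//] := tot _ _ wu.
  by case: (in_x Exy); exact: mono_path_le2_arc.
- have [Exy|//] := tot0 _ _ xy.
  by case: (out_x Exy); exact: mono_path_le2_arc.
Qed.

Lemma forbidding_pembedding_setU1 (G : set (V0 * V)) (x : V0) (w : V) :
  forbidding_pembedding G -> (forall u, ~ G (x, u)) ->
  (forall y u, G (y, u) -> E0 x y -> ~ mono_path_le2 E c u w) ->
  (forall y u, G (y, u) -> E0 y x -> ~ mono_path_le2 E c w u) ->
  forbidding_pembedding (G `|` [set (x, w)]).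
Proof.
move=> PG xG out_x in_x.
have arcs y u : G (y, u) -> [/\ x <> y, w <> u, E0 x y <-> E w u & E0 y x <-> E u w].
  move=> Gyu; have xy : x <> y by move=> xy; subst y; exact: xG Gyu.
  by have [] := new_vertex_arcs xy (out_x _ _ Gyu) (in_x _ _ Gyu).
case: HT0 HT => irr0 _ [irr _].
move=> x1 u1 y1 v1 [G1|[-> ->]] [G2|[-> ->]].
- exact: PG.
- have [xy wu Exy Eyx] := arcs _ _ G1.
  split=> [|//|Ex1x]; first by split=> e; congruence.
  by split; [exact/Eyx | exact: in_x G1 Ex1x].
- have [xy wu Exy Eyx] := arcs _ _ G2.
  split=> [|//|Exy1]; first by split=> e; congruence.
  by split; [exact/Exy | exact: out_x G2 Exy1].
- by split=> [//||/irr0//]; split=> [/irr0|/irr].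
Qed.

Lemma maximal_forbidding_pembedding_total (G : set (V0 * V)) :
  ~ (exists Ks Ss, king_serf_duo E c Ks Ss /\ duo_size_le Ks Ss V0) ->
  forbidding_pembedding G -> (forall H, G `<` H -> ~ forbidding_pembedding H) ->
  forall x, exists u, G (x, u).
Proof.
move=> no_duo PG Gmax x; apply: contrapT => xG.
have {}xG u : ~ G (x, u) by move=> Gxu; apply: xG; exists u.
pose Ks := [set u | exists2 y, G (y, u) & E0 x y].
pose Ss := [set u | exists2 y, G (y, u) & E0 y x].
have disj u : ~ (Ks u /\ Ss u).
  move=> [[y1 G1 Exy1] [y2 G2 Ey2x]].
  have [[_ /(_ erefl) y12] _ _] := PG _ _ _ _ G1 G2; subst y2.
  by case: HT0 => _ [_ asy0]; exact: asy0 Exy1 Ey2x.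
have small : duo_size_le Ks Ss V0.
  apply: card_le_functional_range => [a b b' Gab Gab' | b [[a Gab _] | [a Gab _]]].
  - by have [[ab _] _ _] := PG _ _ _ _ Gab Gab'; exact: ab.
  - by exists a.
  - by exists a.
have [w [out_w in_w]] := uncovered_vertex no_duo disj small.
apply: (Gmax (G `|` [set (x, w)])).
- split; first exact: subsetUl.
  by move=> /(_ (x, w) (or_intror erefl)); exact: xG.
- by apply: forbidding_pembedding_setU1 => // y u Gyu Exy;
    [apply: out_w | apply: in_w]; exists y.
Qed.

Theorem forbidding_embedding_of_no_small_duo :
  ~ (exists Ks Ss, king_serf_duo E c Ks Ss /\ duo_size_le Ks Ss V0) ->
  exists f : V0 -> V,
    [/\ forall x y, f x = f y -> x = y,
        forall x y, E0 x y <-> E (f x) (f y) &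
        forall x y, E0 x y -> forbidding E c (f x) (f y)].
Proof.
move=> no_duo.
have [G [PG Gmax]] := Zorn_bigcup forbidding_pembedding_bigcup.
have Gtot := maximal_forbidding_pembedding_total no_duo PG Gmax.
pose f x := sval (cid (Gtot x)).
have Gf x : G (x, f x) := svalP (cid (Gtot x)).
exists f; split=> x y; have [fxy Exy forb] := PG _ _ _ _ (Gf x) (Gf y).
- by move/fxy.
- exact: Exy.
- exact: forb.
Qed.

End ForbiddingEmbedding.

Theorem lemma5
  (K : Type) (k0 : K)                                  (* kappa > 0 *)
  (V0 : Type) (E0 : V0 -> V0 -> Prop)                  (* T_kappa *)
  (HT0 : tournament E0)
  (Hsize0 : card_le V0 (expT 10 K))                    (* |V(T_kappa)| <= exp_10(kappa) *)
  (Hcol0 : forall c0 : colouring V0 K, has_qm_triangle E0 c0)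
  (V : Type) (E : V -> V -> Prop) (HT : tournament E)  (* T *)
  (c : colouring V K)
  (Hno : ~ exists Ks Ss : V -> Prop,
           king_serf_duo E c Ks Ss /\ duo_size_le Ks Ss V0) :
  exists f : V0 -> V,
    (forall x y, f x = f y -> x = y) /\
    (forall x y, E0 x y <-> E (f x) (f y)) /\
    (forall x y, E0 x y -> forbidding E c (f x) (f y)).
Proof.
have [f [f_inj f_arcs f_forb]] := forbidding_embedding_of_no_small_duo HT0 HT Hno.
by exists f.
Qed.
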